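(* Let $M$ and $N$ be finitely generated, semipositive binoids of finite dimension such that $e_{HK}(M)$ and $e_{HK}(N)$ exist. Then $e_{HK}(M\wedge N)$ exists and $$e_{HK}(M\wedge N)=e_{HK}(M)\cdot e_{HK}(N).$$
   Context: A binoid $(N,+,0,\infty)$ is a commutative monoid $(N,+,0)$ with an element $\infty$ satisfying $a+\infty=\infty$ for all $a\in N$. Write $N^\bullet=N\setminus\{\infty\}$, $N^\times$ for the group of units of $N$ and $N_+=N\setminus N^\times$. $N$ is finitely generated if it is finitely generated as a monoid; semipositive if $N\neq\{\infty\}$ and $N^\times$ is finite. The smash product $M\wedge N$ is the binoid $(M^\bullet\times N^\bullet)\cup\{\infty\}$ with $(a,b)+(c,d)=(a+c,b+d)$ if $a+c\neq\infty$ and $b+d\neq\infty$, and $=\infty$ otherwise. An ideal of $N$ is a nonempty subset $I\subseteq N$ with $I+N\subseteq I$. For an ideal $I$ and $q\in\mathbb N_+$, $[q]I$ denotes the ideal generated by $\{qa: a\in I\}$; $N/I=(N\setminus I)\cup\{\infty\}$. A prime ideal is an ideal $\mathfrak p\neq N$ such that $a+b\in\mathfrak p$ implies $a\in\mathfrak p$ or $b\in\mathfrak p$; the (combinatorial) dimension $\dim N$ is the supremum of the lengths $k$ of chains $\mathfrak p_0\subsetneq\cdots\subsetneq\mathfrak p_k$ of prime ideals. $\operatorname{HKF}(N,q)=\#N/[q]N_+$, with $\#S=|S|-1$ for a finite pointed set $S$, and $e_{HK}(N)=\lim_{q\to\infty}\operatorname{HKF}(N,q)/q^{\dim N}$ over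 all positive integers $q$, when it exists. *)

From Stdlib Require Import Reals List ClassicalEpsilon.
Open Scope R_scope.

Record binoid_data := Binoid {
  bcar : Type;
  badd : bcar -> bcar -> bcar;
  bzero : bcar;
  binf : bcar
}.

Definition is_binoid (N : binoid_data) : Prop :=
  (forall a b : bcar N, badd N a b = badd N b a) /\
  (forall a b c : bcar N, badd N (badd N a b) c = badd N a (badd N b c)) /\
  (forall a : bcar N, badd N (bzero N) a = a) /\
  (forall a : bcar N, badd N a (binf N) = binf N).

Definition is_unit (N : binoid_data) (a : bcar N) : Prop :=
  exists b, badd N a b = bzero N.
Definition Nplus (N : binoid_data) (a : bcar N) : Prop := ~ is_unit N a.

Inductive gen_by (N : binoid_data) (l : list (bcar N)) : bcar N -> Prop :=
  | gen_zero : gen_by N l (bzero N)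
  | gen_gen : forall g, In g l -> gen_by N l g
  | gen_add : forall a b, gen_by N l a -> gen_by N l b -> gen_by N l (badd N a b).

Definition fin_generated (N : binoid_data) : Prop :=
  exists l : list (bcar N), forall a, gen_by N l a.

Definition semipositive (N : binoid_data) : Prop :=
  (exists a : bcar N, a <> binf N) /\
  (exists l : list (bcar N), forall u, is_unit N u -> In u l).

Definition is_ideal (N : binoid_data) (I : bcar N -> Prop) : Prop :=
  (exists a, I a) /\ (forall a b, I a -> I (badd N a b)).

Definition is_prime (N : binoid_data) (P : bcar N -> Prop) : Prop :=
  is_ideal N P /\ (exists a, ~ P a) /\
  (forall a b, P (badd N a b) -> P a \/ P b).

Definition strict_incl {T : Type} (P Q : T -> Prop) : Prop :=
  (forall x, P x -> Q x) /\ (exists x, Q x /\ ~ P x).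

(* a chain p_0 < p_1 < ... < p_k of prime ideals, given as list [p_0; ...; p_k] *)
Fixpoint strict_chain {T : Type} (p : T -> Prop) (l : list (T -> Prop)) : Prop :=
  match l with
  | nil => True
  | q :: l' => strict_incl p q /\ strict_chain q l'
  end.

Definition prime_chain_of_length (N : binoid_data) (k : nat) : Prop :=
  exists (p0 : bcar N -> Prop) (l : list (bcar N -> Prop)),
    length l = k /\ is_prime N p0 /\ Forall (is_prime N) l /\ strict_chain p0 l.

Definition is_dim (N : binoid_data) (d : nat) : Prop :=
  prime_chain_of_length N d /\ (forall k, prime_chain_of_length N k -> (k <= d)%nat).

Fixpoint nsmul (N : binoid_data) (q : nat) (a : bcar N) : bcar N :=
  match q with
  | O => bzero N
  | S q' => badd N a (nsmul N q' a)
  end.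

(* [q]N_+ : the ideal generated by {q a | a in N_+}, i.e. {q a + x} *)
Definition qNplus (N : binoid_data) (q : nat) (y : bcar N) : Prop :=
  exists a x, Nplus N a /\ y = badd N (nsmul N q a) x.

(* HKF(N, q) = #(N / [q]N_+) = |(N \ [q]N_+) u {inf}| - 1 = k *)
Definition HKF_is (N : binoid_data) (q k : nat) : Prop :=
  exists l : list (bcar N), NoDup l /\ length l = S k /\
    (forall x, In x l <-> (~ qNplus N q x \/ x = binf N)).

(* e_HK(N) exists and equals e (dim N finite; limit over q = 1, 2, ...) *)
Definition eHK_is (N : binoid_data) (e : R) : Prop :=
  exists d : nat, is_dim N d /\
  exists h : nat -> nat, (forall n, HKF_is N (S n) (h n)) /\
    Un_cv (fun n => INR (h n) / (INR (S n)) ^ d) e.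

(* smash product M ^ N, carrier (M^. x N^.) u {inf}, with None = inf *)
Definition pt (N : binoid_data) := { a : bcar N | a <> binf N }.

Definition smash_car (M N : binoid_data) : Type := option (pt M * pt N).

Definition smash_add (M N : binoid_data) (x y : smash_car M N) : smash_car M N :=
  match x, y with
  | Some (a, b), Some (c, d) =>
      match excluded_middle_informative (badd M (proj1_sig a) (proj1_sig c) <> binf M),
            excluded_middle_informative (badd N (proj1_sig b) (proj1_sig d) <> binf N) with
      | left h1, left h2 =>
          Some (exist _ (badd M (proj1_sig a) (proj1_sig c)) h1,
                exist _ (badd N (proj1_sig b) (proj1_sig d)) h2)
      | _, _ => None
      end
  | _, _ => None
  end.

Definition smash_zero (M N : binoid_data) : smash_car M N :=
  match excluded_middle_informative (bzero M <> binf M),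
        excluded_middle_informative (bzero N <> binf N) with
  | left h1, left h2 => Some (exist _ (bzero M) h1, exist _ (bzero N) h2)
  | _, _ => None
  end.

Definition smash (M N : binoid_data) : binoid_data :=
  Binoid (smash_car M N) (smash_add M N) (smash_zero M N) None.

From Stdlib Require Import Reals List ClassicalEpsilon Classical ProofIrrelevance Lia
  FunctionalExtensionality.

(* Identify M ∧ N with the pairs of M × N whose entries are both finite, every pair with
   an infinite entry being collapsed to ∞.  A finite pair is a unit iff both entries are
   units, so a finite pair (a, b) lies in [q](M ∧ N)_+ iff a lies in [q]M_+ or b lies in
   [q]N_+: the complement of [q](M ∧ N)_+ is the product of the two complements, and
   HKF(M ∧ N, q) = HKF(M, q) · HKF(N, q).  A prime P of M ∧ N is the union of its
   contractions along a ↦ (a, 0) and b ↦ (0, b), so each strict step of a chain of primes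
   strictly enlarges one of the two contractions; conversely the ideals {(a, b) | a ∈ p or
   b ∈ q} are prime.  Hence dim (M ∧ N) = dim M + dim N, and the normalized Hilbert-Kunz
   function of M ∧ N is the product of those of M and N. *)

Local Open Scope nat_scope.

Section BinoidFacts.

Context {N : binoid_data} (BN : is_binoid N).

Lemma badd_comm (a b : bcar N) : badd N a b = badd N b a.
Proof. apply BN. Qed.

Lemma badd_assoc (a b c : bcar N) : badd N (badd N a b) c = badd N a (badd N b c).
Proof. apply BN. Qed.

Lemma bzero_badd (a : bcar N) : badd N (bzero N) a = a.
Proof. apply BN. Qed.

Lemma badd_bzero (a : bcar N) : badd N a (bzero N) = a.
Proof. rewrite badd_comm. apply bzero_badd. Qed.

Lemma badd_binf (a : bcar N) : badd N a (binf N) = binf N.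
Proof. apply BN. Qed.

Lemma binf_badd (a : bcar N) : badd N (binf N) a = binf N.
Proof. rewrite badd_comm. apply badd_binf. Qed.

Lemma nsmul_binf (q : nat) : nsmul N (S q) (binf N) = binf N.
Proof. apply binf_badd. Qed.

Lemma semipositive_bzero_neq_binf : semipositive N -> bzero N <> binf N.
Proof.
  intros [[a Ha] _] E. apply Ha.
  rewrite <- (bzero_badd a), E. apply binf_badd.
Qed.

Lemma ideal_binf (I : bcar N -> Prop) : is_ideal N I -> I (binf N).
Proof. intros [[a Ia] closed]. rewrite <- (badd_binf a). auto. Qed.

Lemma prime_not_bzero (P : bcar N -> Prop) : is_prime N P -> ~ P (bzero N).
Proof.
  intros [[_ closed] [[a Pa] _]] P0. apply Pa.
  rewrite <- (bzero_badd a). auto.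
Qed.

Lemma prime_badd (P : bcar N -> Prop) (a b : bcar N) :
  is_prime N P -> P (badd N a b) <-> P a \/ P b.
Proof.
  intros [[_ closed] [_ prime]]. split; [apply prime|].
  intros [Pa|Pb]; [|rewrite badd_comm]; auto.
Qed.

End BinoidFacts.

Definition is_binoid_hom (M S : binoid_data) (f : bcar M -> bcar S) : Prop :=
  f (bzero M) = bzero S /\ f (binf M) = binf S /\
  (forall a b, f (badd M a b) = badd S (f a) (f b)).

Lemma hom_nsmul {M S : binoid_data} (f : bcar M -> bcar S) (q : nat) (a : bcar M) :
  is_binoid_hom M S f -> f (nsmul M q a) = nsmul S q (f a).
Proof.
  intros (f0 & _ & fadd). induction q as [|q IH]; simpl; [exact f0|].
  rewrite fadd, IH. reflexivity.
Qed.

Lemma prime_preimage {M S : binoid_data} (BS : is_binoid S) (f : bcar M -> bcar S)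
  (P : bcar S -> Prop) :
  is_binoid_hom M S f -> is_prime S P -> is_prime M (fun a => P (f a)).
Proof.
  intros (f0 & finf & fadd) hP. pose proof hP as [[_ closed] _].
  split; [split|split].
  - exists (binf M). rewrite finf. apply (ideal_binf BS), hP.
  - intros a b Pa. rewrite fadd. auto.
  - exists (bzero M). rewrite f0. apply (prime_not_bzero BS), hP.
  - intros a b. rewrite fadd. apply (prime_badd BS P _ _ hP).
Qed.

Section SmashEmbedding.

Context {M N : binoid_data}.

Definition prod_add (x y : bcar M * bcar N) : bcar M * bcar N :=
  (badd M (fst x) (fst y), badd N (snd x) (snd y)).

Definition collapse (x : bcar M * bcar N) : bcar M * bcar N :=
  if excluded_middle_informative (fst x = binf M \/ snd x = binf N)
  then (binf M, binf N) else x.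

Definition smash_emb (z : smash_car M N) : bcar M * bcar N :=
  match z with
  | None => (binf M, binf N)
  | Some (a, b) => (proj1_sig a, proj1_sig b)
  end.

Definition smash_of (x : bcar M * bcar N) : smash_car M N :=
  match excluded_middle_informative (fst x <> binf M),
        excluded_middle_informative (snd x <> binf N) with
  | left ha, left hb => Some (exist _ (fst x) ha, exist _ (snd x) hb)
  | _, _ => None
  end.

Lemma collapse_binf (x : bcar M * bcar N) :
  fst x = binf M \/ snd x = binf N -> collapse x = (binf M, binf N).
Proof. unfold collapse. destruct excluded_middle_informative; tauto. Qed.

Lemma collapse_fin (x : bcar M * bcar N) :
  fst x <> binf M -> snd x <> binf N -> collapse x = x.
Proof. unfold collapse. destruct excluded_middle_informative; tauto. Qed.

Lemma collapse_cases (x : bcar M * bcar N) :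
  (fst x = binf M \/ snd x = binf N) /\ collapse x = (binf M, binf N) \/ collapse x = x.
Proof. unfold collapse. destruct excluded_middle_informative; tauto. Qed.

Lemma collapse_eq_fin (x y : bcar M * bcar N) :
  collapse x = y -> fst y <> binf M -> x = y.
Proof. destruct (collapse_cases x) as [[_ ->] | ->]; [intros <-; simpl|]; tauto. Qed.

Lemma smash_emb_of (x : bcar M * bcar N) : smash_emb (smash_of x) = collapse x.
Proof.
  destruct x as [a b]. unfold smash_of, collapse; simpl.
  destruct (excluded_middle_informative (a <> binf M));
  destruct (excluded_middle_informative (b <> binf N));
  destruct (excluded_middle_informative (a = binf M \/ b = binf N)); simpl; tauto.
Qed.

Lemma collapse_emb (z : smash_car M N) : collapse (smash_emb z) = smash_emb z.
Proof.
  destruct z as [[[a ha] [b hb]]|]; simpl.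
  - apply collapse_fin; assumption.
  - apply collapse_binf. auto.
Qed.

Lemma smash_emb_inj (z w : smash_car M N) : smash_emb z = smash_emb w -> z = w.
Proof.
  destruct z as [[[a ha] [b hb]]|]; destruct w as [[[c hc] [d hd]]|]; simpl;
    intro E; inversion E; subst; try contradiction; [|reflexivity].
  f_equal. f_equal; f_equal; apply proof_irrelevance.
Qed.

Lemma smash_of_emb (z : smash_car M N) : smash_of (smash_emb z) = z.
Proof. apply smash_emb_inj. rewrite smash_emb_of. apply collapse_emb. Qed.

Hypotheses (BM : is_binoid M) (BN : is_binoid N).

Lemma prod_add_binf (x y : bcar M * bcar N) :
  fst x = binf M \/ snd x = binf N ->
  fst (prod_add x y) = binf M \/ snd (prod_add x y) = binf N.
Proof. intros [E|E]; simpl; rewrite E; [left|right]; apply binf_badd; assumption. Qed.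

Lemma prod_add_comm (x y : bcar M * bcar N) : prod_add x y = prod_add y x.
Proof. unfold prod_add. rewrite (badd_comm BM), (badd_comm BN). reflexivity. Qed.

Lemma prod_add_assoc (x y v : bcar M * bcar N) :
  prod_add (prod_add x y) v = prod_add x (prod_add y v).
Proof. unfold prod_add; simpl. rewrite (badd_assoc BM), (badd_assoc BN). reflexivity. Qed.

Lemma collapse_prod_add_l (x y : bcar M * bcar N) :
  collapse (prod_add (collapse x) y) = collapse (prod_add x y).
Proof.
  destruct (collapse_cases x) as [[Hx ->] | ->]; [|reflexivity].
  rewrite !collapse_binf; auto using prod_add_binf.
Qed.

Lemma collapse_prod_add_r (x y : bcar M * bcar N) :
  collapse (prod_add x (collapse y)) = collapse (prod_add x y).
Proof. rewrite prod_add_comm, collapse_prod_add_l, prod_add_comm. reflexivity. Qed.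

Lemma smash_emb_add (z w : smash_car M N) :
  smash_emb (smash_add M N z w) = collapse (prod_add (smash_emb z) (smash_emb w)).
Proof.
  destruct z as [[[a ha] [b hb]]|]; destruct w as [[[c hc] [d hd]]|];
    unfold smash_add, prod_add; simpl.
  - unfold collapse; simpl.
    destruct (excluded_middle_informative (badd M a c <> binf M));
    destruct (excluded_middle_informative (badd N b d <> binf N));
    destruct excluded_middle_informative; simpl; tauto.
  - rewrite collapse_binf; simpl; auto using badd_binf.
  - rewrite collapse_binf; simpl; auto using binf_badd.
  - rewrite collapse_binf; simpl; auto using binf_badd.
Qed.

End SmashEmbedding.

Section SmashBinoid.

Context {M N : binoid_data} (BM : is_binoid M) (BN : is_binoid N).
Hypotheses (zM : bzero M <> binf M) (zN : bzero N <> binf N).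

Lemma smash_emb_zero : smash_emb (smash_zero M N) = (bzero M, bzero N).
Proof.
  unfold smash_zero.
  destruct (excluded_middle_informative (bzero M <> binf M)); [|contradiction].
  destruct (excluded_middle_informative (bzero N <> binf N)); [|contradiction].
  reflexivity.
Qed.

Lemma smash_of_zero : smash_of (bzero M, bzero N) = smash_zero M N.
Proof.
  apply smash_emb_inj. rewrite smash_emb_of, smash_emb_zero. apply collapse_fin; assumption.
Qed.

Lemma smash_of_add (x y : bcar M * bcar N) :
  smash_of (prod_add x y) = badd (smash M N) (smash_of x) (smash_of y).
Proof.
  apply smash_emb_inj. simpl. rewrite (smash_emb_add BN), !smash_emb_of.
  rewrite (collapse_prod_add_l BM BN), (collapse_prod_add_r BM BN). reflexivity.
Qed.

Lemma is_binoid_smash : is_binoid (smash M N).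
Proof.
  split; [|split; [|split]]; simpl; intros; apply smash_emb_inj;
    rewrite ?(smash_emb_add BN).
  - rewrite (prod_add_comm BM BN). reflexivity.
  - rewrite (collapse_prod_add_l BM BN), (collapse_prod_add_r BM BN), (prod_add_assoc BM BN).
    reflexivity.
  - rewrite smash_emb_zero. unfold prod_add; simpl.
    rewrite (bzero_badd BM), (bzero_badd BN), <- surjective_pairing. apply collapse_emb.
  - apply collapse_binf. simpl. left. apply (badd_binf BM).
Qed.

Lemma smash_emb_nsmul (q : nat) (z : smash_car M N) :
  smash_emb (nsmul (smash M N) q z) =
  collapse (nsmul M q (fst (smash_emb z)), nsmul N q (snd (smash_emb z))).
Proof.
  induction q as [|q IH]; simpl.
  - rewrite smash_emb_zero. symmetry. apply collapse_fin; assumption.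
  - rewrite (smash_emb_add BN), IH, (collapse_prod_add_r BM BN). reflexivity.
Qed.

Lemma smash_inl_hom : is_binoid_hom M (smash M N) (fun a => smash_of (a, bzero N)).
Proof.
  split; [|split].
  - apply smash_of_zero.
  - apply smash_emb_inj. rewrite smash_emb_of. apply collapse_binf. auto.
  - intros a b. rewrite <- smash_of_add. unfold prod_add; simpl.
    rewrite (bzero_badd BN). reflexivity.
Qed.

Lemma smash_inr_hom : is_binoid_hom N (smash M N) (fun b => smash_of (bzero M, b)).
Proof.
  split; [|split].
  - apply smash_of_zero.
  - apply smash_emb_inj. rewrite smash_emb_of. apply collapse_binf. auto.
  - intros a b. rewrite <- smash_of_add. unfold prod_add; simpl.
    rewrite (bzero_badd BM). reflexivity.
Qed.

End SmashBinoid.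

Section SmashFrobenius.

Context {M N : binoid_data} (BM : is_binoid M) (BN : is_binoid N).
Hypotheses (zM : bzero M <> binf M) (zN : bzero N <> binf N).

Lemma smash_point_eq (a : bcar M) (b : bcar N) (ha : a <> binf M) (hb : b <> binf N) :
  Some (exist _ a ha, exist _ b hb) = smash_of (a, b).
Proof. apply smash_emb_inj. rewrite smash_emb_of. symmetry. apply collapse_fin; assumption. Qed.

Lemma smash_unit_iff (w : smash_car M N) :
  is_unit (smash M N) w <->
  is_unit M (fst (smash_emb w)) /\ is_unit N (snd (smash_emb w)).
Proof.
  split.
  - intros [v E]. apply (f_equal smash_emb) in E. simpl in E.
    rewrite (smash_emb_add BN), (smash_emb_zero zM zN) in E.
    apply collapse_eq_fin in E; [|assumption]. injection E as E1 E2.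
    split; [exists (fst (smash_emb v)) | exists (snd (smash_emb v))]; assumption.
  - intros [[c hc] [d hd]]. exists (smash_of (c, d)). apply smash_emb_inj. simpl.
    rewrite (smash_emb_add BN), smash_emb_of, (collapse_prod_add_r BM BN),
      (smash_emb_zero zM zN).
    unfold prod_add; simpl. rewrite hc, hd. apply collapse_fin; assumption.
Qed.

Lemma qNplus_smash (q : nat) (a : bcar M) (b : bcar N) (ha : a <> binf M) (hb : b <> binf N) :
  qNplus (smash M N) (S q) (Some (exist _ a ha, exist _ b hb)) <->
  qNplus M (S q) a \/ qNplus N (S q) b.
Proof.
  split.
  - intros [w [x [hw E]]]. apply (f_equal smash_emb) in E. cbn [smash_emb badd smash] in E.
    rewrite (smash_emb_add BN), (smash_emb_nsmul BM BN zM zN), (collapse_prod_add_l BM BN)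
      in E.
    symmetry in E. apply collapse_eq_fin in E; [|assumption]. injection E as Ea Eb.
    unfold Nplus in hw. rewrite smash_unit_iff in hw. apply not_and_or in hw as [hw|hw].
    + left. exists (fst (smash_emb w)), (fst (smash_emb x)). auto.
    + right. exists (snd (smash_emb w)), (snd (smash_emb x)). auto.
  - rewrite smash_point_eq.
    intros [[c [x [hc E]]] | [d [x [hd E]]]].
    + assert (c <> binf M) by (intros ->; apply ha; rewrite E, (nsmul_binf BM); apply (binf_badd BM)).
      assert (x <> binf M) by (intros ->; apply ha; rewrite E; apply (badd_binf BM)).
      exists (smash_of (c, bzero N)), (smash_of (x, b)). split.
      * unfold Nplus in *. rewrite smash_unit_iff, smash_emb_of, collapse_fin by assumption. simpl. tauto.
      * pose proof (hom_nsmul _ (S q) c (smash_inl_hom BM BN zM zN)) as Hq.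
        cbv beta in Hq. rewrite <- Hq, <- (smash_of_add BM BN).
        unfold prod_add; cbn [fst snd]. rewrite (bzero_badd BN), <- E.
        reflexivity.
    + assert (d <> binf N) by (intros ->; apply hb; rewrite E, (nsmul_binf BN); apply (binf_badd BN)).
      assert (x <> binf N) by (intros ->; apply hb; rewrite E; apply (badd_binf BN)).
      exists (smash_of (bzero M, d)), (smash_of (a, x)). split.
      * unfold Nplus in *. rewrite smash_unit_iff, smash_emb_of, collapse_fin by assumption. simpl. tauto.
      * pose proof (hom_nsmul _ (S q) d (smash_inr_hom BM BN zM zN)) as Hq.
        cbv beta in Hq. rewrite <- Hq, <- (smash_of_add BM BN).
        unfold prod_add; cbn [fst snd]. rewrite (bzero_badd BM), <- E.
        reflexivity.
Qed.

End SmashFrobenius.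

Lemma NoDup_list_prod {A B : Type} (l : list A) (l' : list B) :
  NoDup l -> NoDup l' -> NoDup (list_prod l l').
Proof.
  induction l as [|x l IH]; simpl; intros nd nd'; [constructor|]. inversion nd; subst.
  apply NoDup_app; auto.
  - apply NoDup_map_NoDup_ForallPairs; auto. intros u v _ _ E. inversion E. reflexivity.
  - intros [u v] i1 i2. apply in_map_iff in i1 as [w [E _]]. inversion E; subst.
    apply in_prod_iff in i2. tauto.
Qed.

Fixpoint points_of (N : binoid_data) (l : list (bcar N)) : list (pt N) :=
  match l with
  | nil => nil
  | x :: l' =>
      match excluded_middle_informative (x <> binf N) with
      | left h => exist _ x h :: points_of N l'
      | right _ => points_of N l'
      end
  end.

Lemma In_points_of (N : binoid_data) (l : list (bcar N)) (a : pt N) :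
  In a (points_of N l) <-> In (proj1_sig a) l.
Proof.
  induction l as [|x l IH]; simpl; [tauto|].
  destruct excluded_middle_informative as [h|h]; simpl; rewrite IH.
  - destruct a as [a ha]; simpl. split; intros [E|E]; auto.
    + inversion E. auto.
    + left. subst. f_equal. apply proof_irrelevance.
  - split; auto. intros [E|E]; auto. subst. destruct a; contradiction.
Qed.

Lemma NoDup_points_of (N : binoid_data) (l : list (bcar N)) :
  NoDup l -> NoDup (points_of N l).
Proof.
  induction l as [|x l IH]; simpl; intro nd; [constructor|]. inversion nd; subst.
  destruct excluded_middle_informative; auto.
  constructor; auto. intro i. apply In_points_of in i. contradiction.
Qed.

Lemma length_points_of_binf_free (N : binoid_data) (l : list (bcar N)) :
  ~ In (binf N) l -> length (points_of N l) = length l.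
Proof.
  induction l as [|x l IH]; simpl; intro ni; auto.
  destruct excluded_middle_informative as [h|h]; simpl.
  - rewrite IH; auto.
  - apply NNPP in h. tauto.
Qed.

Lemma length_points_of (N : binoid_data) (l : list (bcar N)) :
  NoDup l -> In (binf N) l -> S (length (points_of N l)) = length l.
Proof.
  induction l as [|x l IH]; simpl; intros nd i; [contradiction|]. inversion nd; subst.
  destruct excluded_middle_informative as [h|h]; simpl.
  - destruct i as [i|i]; [congruence|]. rewrite IH; auto.
  - apply NNPP in h. subst. rewrite length_points_of_binf_free; auto.
Qed.

Lemma HKF_is_points (N : binoid_data) (q k : nat) :
  HKF_is N q k ->
  exists l : list (pt N), NoDup l /\ length l = k /\
    (forall a, In a l <-> ~ qNplus N q (proj1_sig a)).
Proof.
  intros [l (nd & len & Hl)]. exists (points_of N l). split; [|split].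
  - apply NoDup_points_of. assumption.
  - apply eq_add_S. rewrite length_points_of, len; auto. apply Hl. auto.
  - intros [a ha]. rewrite In_points_of, Hl. simpl. tauto.
Qed.

Lemma HKF_smash {M N : binoid_data} (BM : is_binoid M) (BN : is_binoid N)
  (zM : bzero M <> binf M) (zN : bzero N <> binf N) (q k1 k2 : nat) :
  HKF_is M (S q) k1 -> HKF_is N (S q) k2 -> HKF_is (smash M N) (S q) (k1 * k2).
Proof.
  intros HM HN.
  destruct (HKF_is_points M _ _ HM) as [l1 (nd1 & len1 & H1)].
  destruct (HKF_is_points N _ _ HN) as [l2 (nd2 & len2 & H2)].
  exists (None :: map Some (list_prod l1 l2)). split; [|split].
  - constructor.
    + rewrite in_map_iff. intros [? [E _]]. discriminate.
    + apply NoDup_map_NoDup_ForallPairs; [|apply NoDup_list_prod; assumption].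
      intros u v _ _ E. inversion E. reflexivity.
  - simpl. rewrite length_map, length_prod. congruence.
  - intros [[[a ha] [b hb]]|]; simpl; [|tauto].
    rewrite (qNplus_smash BM BN zM zN), in_map_iff.
    split.
    + intros [E|[[u v] [E i]]]; [discriminate|]. injection E as -> ->.
      apply in_prod_iff in i. rewrite H1, H2 in i. simpl in i. tauto.
    + intros [h|h]; [|discriminate]. right. exists (exist _ a ha, exist _ b hb).
      split; [reflexivity|]. apply in_prod_iff. rewrite H1, H2. simpl. tauto.
Qed.

Lemma strict_chain_weaken {T : Type} (p p' : T -> Prop) (l : list (T -> Prop)) :
  (forall x, p x -> p' x) -> strict_chain p' l -> strict_chain p l.
Proof.
  destruct l as [|q l]; simpl; [auto|].
  intros inc [[inc' [x [qx p'x]]] c]. split; [|exact c].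
  split; [auto|]. exists x. auto.
Qed.

Lemma last_cons_default {A : Type} (r : A) (l : list A) (d d' : A) :
  last (r :: l) d = last (r :: l) d'.
Proof. revert r; induction l as [|x l IH]; intro r; [reflexivity|]. apply (IH x). Qed.

Lemma strict_chain_app {T : Type} (p : T -> Prop) (l1 l2 : list (T -> Prop)) :
  strict_chain p l1 -> strict_chain (last l1 p) l2 -> strict_chain p (l1 ++ l2).
Proof.
  revert p. induction l1 as [|q l1 IH]; simpl; intros p c1 c2; [assumption|].
  destruct c1 as [s c1]. split; [assumption|]. apply IH; [assumption|].
  destruct l1 as [|r l1]; [assumption|]. rewrite (last_cons_default r l1 q p). exact c2.
Qed.

Lemma last_map {A B : Type} (f : A -> B) (l : list A) (d : A) :
  last (map f l) (f d) = f (last l d).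
Proof.
  revert d; induction l as [|x l IH]; intro d; [reflexivity|].
  destruct l; [reflexivity|]. apply IH.
Qed.

Lemma Forall_last {A : Type} (P : A -> Prop) (l : list A) (d : A) :
  P d -> Forall P l -> P (last l d).
Proof.
  revert d; induction l as [|x l IH]; simpl; intros d hd hl; [assumption|].
  inversion hl; subst. destruct l; auto.
Qed.

Lemma strict_chain_map {T U : Type} (R : (T -> Prop) -> Prop)
  (F : (T -> Prop) -> (U -> Prop)) (p : T -> Prop) (l : list (T -> Prop)) :
  (forall p p', R p -> R p' -> strict_incl p p' -> strict_incl (F p) (F p')) ->
  R p -> Forall R l -> strict_chain p l -> strict_chain (F p) (map F l).
Proof.
  intros mono. revert p. induction l as [|p' l IH]; simpl; intros p Rp Rl c; [exact I|].
  inversion Rl; subst. destruct c as [inc c]. split; auto.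
Qed.

Definition prime_chain_above (N : binoid_data) (p : bcar N -> Prop) (k : nat) : Prop :=
  exists l, length l = k /\ Forall (is_prime N) l /\ strict_chain p l.

Section SmashPrimes.

Context {M N : binoid_data} (BM : is_binoid M) (BN : is_binoid N).
Hypotheses (zM : bzero M <> binf M) (zN : bzero N <> binf N).

Definition smash_contract_l (P : smash_car M N -> Prop) (a : bcar M) : Prop :=
  P (smash_of (a, bzero N)).

Definition smash_contract_r (P : smash_car M N -> Prop) (b : bcar N) : Prop :=
  P (smash_of (bzero M, b)).

Definition smash_ideal (p : bcar M -> Prop) (q : bcar N -> Prop) (z : smash_car M N) : Prop :=
  p (fst (smash_emb z)) \/ q (snd (smash_emb z)).

Lemma smash_contract_l_prime (P : smash_car M N -> Prop) :
  is_prime (smash M N) P -> is_prime M (smash_contract_l P).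
Proof. apply (prime_preimage (is_binoid_smash BM BN zM zN)), (smash_inl_hom BM BN zM zN). Qed.

Lemma smash_contract_r_prime (P : smash_car M N -> Prop) :
  is_prime (smash M N) P -> is_prime N (smash_contract_r P).
Proof. apply (prime_preimage (is_binoid_smash BM BN zM zN)), (smash_inr_hom BM BN zM zN). Qed.

Lemma smash_prime_decomp (P : smash_car M N -> Prop) (z : smash_car M N) :
  is_prime (smash M N) P ->
  P z <-> smash_contract_l P (fst (smash_emb z)) \/ smash_contract_r P (snd (smash_emb z)).
Proof.
  intro hP. unfold smash_contract_l, smash_contract_r.
  rewrite <- (prime_badd (is_binoid_smash BM BN zM zN) P _ _ hP), <- (smash_of_add BM BN).
  unfold prod_add; simpl. rewrite (badd_bzero BM), (bzero_badd BN), <- surjective_pairing.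
  rewrite smash_of_emb. reflexivity.
Qed.

Lemma smash_ideal_prime (p : bcar M -> Prop) (q : bcar N -> Prop) :
  is_prime M p -> is_prime N q -> is_prime (smash M N) (smash_ideal p q).
Proof.
  intros hp hq. unfold smash_ideal.
  assert (pinf := ideal_binf BM p (proj1 hp)). assert (qinf := ideal_binf BN q (proj1 hq)).
  split; [split|split].
  - exists None. simpl. auto.
  - intros z w h. simpl. rewrite (smash_emb_add BN).
    destruct (collapse_cases (prod_add (smash_emb z) (smash_emb w))) as [[_ ->] | ->];
      simpl; [auto|].
    destruct h as [h|h]; [left; apply hp|right; apply hq]; assumption.
  - exists (smash_zero M N). rewrite (smash_emb_zero zM zN). simpl.
    pose proof (prime_not_bzero BM p hp). pose proof (prime_not_bzero BN q hq). tauto.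
  - intros z w. simpl. rewrite (smash_emb_add BN).
    destruct (collapse_cases (prod_add (smash_emb z) (smash_emb w))) as [[h ->] | ->];
      simpl.
    + intros _. destruct h as [h|h]; simpl in h.
      * rewrite <- h, (prime_badd BM p _ _ hp) in pinf. tauto.
      * rewrite <- h, (prime_badd BN q _ _ hq) in qinf. tauto.
    + rewrite (prime_badd BM p _ _ hp), (prime_badd BN q _ _ hq). tauto.
Qed.

Lemma smash_ideal_strict_l (p p' : bcar M -> Prop) (q : bcar N -> Prop) :
  is_ideal M p -> is_prime N q -> strict_incl p p' ->
  strict_incl (smash_ideal p q) (smash_ideal p' q).
Proof.
  intros hp hq [inc [a [p'a pa]]]. unfold smash_ideal. split.
  - intros z [h|h]; auto.
  - assert (a <> binf M) by (intros ->; apply pa, ideal_binf; assumption).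
    exists (smash_of (a, bzero N)). rewrite smash_emb_of, collapse_fin by assumption. simpl.
    pose proof (prime_not_bzero BN q hq). tauto.
Qed.

Lemma smash_ideal_strict_r (p : bcar M -> Prop) (q q' : bcar N -> Prop) :
  is_prime M p -> is_ideal N q -> strict_incl q q' ->
  strict_incl (smash_ideal p q) (smash_ideal p q').
Proof.
  intros hp hq [inc [b [q'b qb]]]. unfold smash_ideal. split.
  - intros z [h|h]; auto.
  - assert (b <> binf N) by (intros ->; apply qb, ideal_binf; assumption).
    exists (smash_of (bzero M, b)). rewrite smash_emb_of, collapse_fin by assumption. simpl.
    pose proof (prime_not_bzero BM p hp). tauto.
Qed.

Lemma smash_chain_split (P0 : bcar (smash M N) -> Prop) (l : list (bcar (smash M N) -> Prop)) :
  is_prime (smash M N) P0 -> Forall (is_prime (smash M N)) l -> strict_chain P0 l ->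
  exists a b, length l <= a + b /\
    prime_chain_above M (smash_contract_l P0) a /\
    prime_chain_above N (smash_contract_r P0) b.
Proof.
  revert P0. induction l as [|P1 l IH]; intros P0 h0 hl c.
  - exists 0, 0. split; [apply le_0_n|]. split; exists nil; simpl; auto.
  - inversion hl as [|? ? h1 hl']; subst. destruct c as [[inc [z [z1 z0]]] c].
    destruct (IH P1 h1 hl' c) as [a [b (hle & [lM (lenM & fM & cM)] & [lN (lenN & fN & cN)])]].
    rewrite smash_prime_decomp in z1, z0 by assumption.
    assert (iM : forall x, smash_contract_l P0 x -> smash_contract_l P1 x) by
      (unfold smash_contract_l; auto).
    assert (iN : forall x, smash_contract_r P0 x -> smash_contract_r P1 x) by
      (unfold smash_contract_r; auto).
    destruct z1 as [z1|z1].
    + exists (S a), b. split; [rewrite length_cons; lia|]. split.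
      * exists (smash_contract_l P1 :: lM). split; [simpl; lia|]. split.
        -- constructor; [apply smash_contract_l_prime|]; assumption.
        -- split; [|assumption]. split; [assumption|]. exists (fst (smash_emb z)). tauto.
      * exists lN. split; [|split]; [assumption..|]. eapply strict_chain_weaken; eassumption.
    + exists a, (S b). split; [rewrite length_cons; lia|]. split.
      * exists lM. split; [|split]; [assumption..|]. eapply strict_chain_weaken; eassumption.
      * exists (smash_contract_r P1 :: lN). split; [simpl; lia|]. split.
        -- constructor; [apply smash_contract_r_prime|]; assumption.
        -- split; [|assumption]. split; [assumption|]. exists (snd (smash_emb z)). tauto.
Qed.

Lemma is_dim_smash (dM dN : nat) :
  is_dim M dM -> is_dim N dN -> is_dim (smash M N) (dM + dN).
Proof.
  intros [[p0 [lp (lenp & hp0 & hlp & cp)]] boundM] [[q0 [lq (lenq & hq0 & hlq & cq)]] boundN].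
  set (pl := last lp p0).
  assert (hpl : is_prime M pl) by (apply Forall_last; assumption).
  split.
  - exists (smash_ideal p0 q0),
      (map (fun p => smash_ideal p q0) lp ++ map (fun q => smash_ideal pl q) lq).
    split; [rewrite length_app, !length_map; lia|].
    split; [apply smash_ideal_prime; assumption|]. split.
    + apply Forall_app; split; apply Forall_map.
      * eapply Forall_impl; [|exact hlp]. intros p hp. apply smash_ideal_prime; assumption.
      * eapply Forall_impl; [|exact hlq]. intros q hq. apply smash_ideal_prime; assumption.
    + apply strict_chain_app.
      * apply (strict_chain_map (is_prime M) (fun p => smash_ideal p q0)); [|assumption..].
        intros p p' hp _. apply smash_ideal_strict_l; [apply hp|assumption].
      * rewrite (last_map (fun p => smash_ideal p q0)).
        apply (strict_chain_map (is_prime N) (smash_ideal pl)); [|assumption..].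
        intros q q' hq _. apply smash_ideal_strict_r; [assumption|apply hq].
  - intros k [P0 [l (len & h0 & hl & c)]].
    destruct (smash_chain_split P0 l h0 hl c) as [a [b (hle & [lM (lenM & fM & cM)] &
      [lN (lenN & fN & cN)])]].
    assert (a <= dM).
    { apply boundM. exists (smash_contract_l P0), lM. auto using smash_contract_l_prime. }
    assert (b <= dN).
    { apply boundN. exists (smash_contract_r P0), lN. auto using smash_contract_r_prime. }
    lia.
Qed.

End SmashPrimes.

Local Open Scope R_scope.

Lemma Un_cv_mul_normalized (a b : nat -> nat) (dM dN : nat) (eM eN : R) :
  Un_cv (fun n => INR (a n) / INR (S n) ^ dM) eM ->
  Un_cv (fun n => INR (b n) / INR (S n) ^ dN) eN ->
  Un_cv (fun n => INR (a n * b n) / INR (S n) ^ (dM + dN)) (eM * eN).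
Proof.
  intros ca cb.
  replace (fun n => INR (a n * b n) / INR (S n) ^ (dM + dN))
    with (fun n => (INR (a n) / INR (S n) ^ dM) * (INR (b n) / INR (S n) ^ dN)).
  - apply CV_mult; assumption.
  - apply functional_extensionality. intro n. rewrite mult_INR, pow_add.
    assert (INR (S n) <> 0) by (apply not_0_INR; discriminate).
    field. split; apply pow_nonzero; assumption.
Qed.

Theorem mainTheorem10 (M N : binoid_data) (eM eN : R) :
  is_binoid M -> is_binoid N ->
  fin_generated M -> fin_generated N ->
  semipositive M -> semipositive N ->
  (exists d, is_dim M d) -> (exists d, is_dim N d) ->
  eHK_is M eM -> eHK_is N eN ->
  eHK_is (smash M N) (eM * eN).
Proof.
  intros BM BN _ _ SM SN _ _ [dM [hdM [hM [HM cM]]]] [dN [hdN [hN [HN cN]]]].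
  pose proof (semipositive_bzero_neq_binf BM SM) as zM.
  pose proof (semipositive_bzero_neq_binf BN SN) as zN.
  exists (dM + dN)%nat. split; [apply is_dim_smash; assumption|].
  exists (fun n => hM n * hN n)%nat. split.
  - intro n. apply HKF_smash; auto.
  - apply Un_cv_mul_normalized; assumption.
Qed.
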